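(* Let $m\ge 2$ be an integer and let $n$ be a positive integer with $m^j\le n<m^{j+1}$ for some integer $j\ge 0$, with base $m$ representation $n=\alpha_j m^j+\cdots+\alpha_1 m+\alpha_0$ ($\alpha_j>0$, $0\le\alpha_i\le m-1$). For $i\ge 1$ let $\chi_i=0$ if $\alpha_{i-1}>0$ and $\chi_i=1$ if $\alpha_{i-1}=0$. Then the number $c_m(n)$ of $m$-ary partitions of $n$ without gaps satisfies \[ c_m(n)=1+\sum_{r=1}^{j}\ \sum_{k_r=\chi_r}^{\lfloor n/m^r\rfloor-1}\ \sum_{k_{r-1}=\chi_{r-1}}^{\alpha_{r-1}-1+mk_r}\cdots\sum_{k_1=\chi_1}^{\alpha_1-1+mk_2}1, \] that is, $c_m(n)=1+\sum_{r=1}^j N_r$, where $N_r$ is the number of integer tuples $(k_r,\ldots,k_1)$ with $\chi_r\le k_r\le \lfloor n/m^r\rfloor-1$ and $\chi_i\le k_i\le \alpha_i-1+mk_{i+1}$ for $1\le i\le r-1$.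
   Context: An $m$-ary partition of a positive integer $n$ is a partition of $n$ in which every part is a power of $m$. It is without gaps if, whenever $m^i$ is its largest part, every $m^k$ with $0\le k<i$ also appears as a part. $c_m(n)$ denotes the number of $m$-ary partitions of $n$ without gaps. $\lfloor a\rfloor$ is the floor of $a$. *)

From mathcomp Require Import all_boot.
Set Implicit Arguments. Unset Strict Implicit. Unset Printing Implicit Defensive.

(* An m-ary partition of n is represented by its multiplicity function:
   f i = number of parts equal to m^i.  Exponents i range over 0..n
   (m >= 2 forces m^i <= n => i <= n) and multiplicities over 0..n
   (each multiplicity is at most n), so no partition is lost. *)
Definition mary_partition_nogap (m n : nat) (f : {ffun 'I_n.+1 -> 'I_n.+1}) : bool :=
  (\sum_(i < n.+1) f i * m ^ i == n) &&
  [forall i : 'I_n.+1,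
     ((0 < f i) && [forall i' : 'I_n.+1, (0 < f i') ==> (i' <= i)]) ==>
     [forall k : 'I_n.+1, (k < i) ==> (0 < f k)]].

Definition c (m n : nat) : nat := #|[set f : {ffun 'I_n.+1 -> 'I_n.+1} | @mary_partition_nogap m n f]|.

Definition alpha (m n i : nat) : nat := (n %/ m ^ i) %% m.

Definition chi (m n i : nat) : nat := (alpha m n i.-1 == 0 : nat).

(* nested m n i b = sum_{k_i = chi_i}^{b-1} sum_{k_{i-1}=chi_{i-1}}^{alpha_{i-1}-1+m k_i}
   ... sum_{k_1=chi_1}^{alpha_1-1+m k_2} 1 ; upper bounds are written exclusively
   (b = upper+1) to avoid truncated subtraction. *)
Fixpoint nested (m n i b : nat) : nat :=
  match i with
  | 0 => 1
  | i'.+1 => \sum_(chi m n i <= k < b) nested m n i' (alpha m n i' + m * k)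
  end.

From mathcomp Require Import all_boot.

Set Implicit Arguments.
Unset Strict Implicit.
Unset Printing Implicit Defensive.

(* A gap-free m-ary partition of n with largest part m^r is a multiplicity
   vector f with f_i > 0 exactly for i <= r; remove its parts from the largest
   down.  Once the parts larger than m^i are gone, the remaining weight has the
   form (n mod m^(i+1)) + m^(i+1) k_(i+1), with k_(r+1) = floor(n / m^(r+1)).
   This is (n mod m^i) + m^i (alpha_i + m k_(i+1)), so for i >= 1 the
   multiplicity of m^i is alpha_i + m k_(i+1) - k_i for a unique
   0 <= k_i < alpha_i + m k_(i+1), leaving (n mod m^i) + m^i k_i.  That rest
   must still contain a part m^(i-1), which fails for k_i = 0 exactly when
   alpha_(i-1) = 0: hence chi_i <= k_i.  At i = 0 the multiplicity of 1 is
   the whole rest.  So the partitions with largest part m^r are counted by the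
   r-fold nested sum, and r = 0 contributes the partition 1 + ... + 1. *)

Lemma modnM_digit n d m : n %% (d * m) = n %% d + d * (n %/ d %% m).
Proof.
rewrite (mulnC d m) {1}(divn_eq (n %% (m * d)) d) -modn_divl.
by rewrite modn_dvdm ?dvdn_mull // addnC mulnC.
Qed.

Section FullMultiplicities.

Variables m n : nat.
Hypothesis m_gt0 : 0 < m.

Local Notation mults := {ffun 'I_n.+1 -> 'I_n.+1}.

Definition weight (f : mults) : nat := \sum_(i < n.+1) f i * m ^ i.

(* For [p > 0]: [f] is gap-free with largest part [m ^ p.-1]. *)
Definition full_below (p : nat) (f : mults) : bool :=
  [forall i, (0 < f i) == (i < p)].

Definition count_full (p N : nat) : nat :=
  \sum_(f : mults) (full_below p f && (weight f == N)).

Definition mult_upd (p x : 'I_n.+1) (f : mults) : mults :=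
  [ffun i => if i == p then x else f i].

Lemma weight_upd (p x : 'I_n.+1) (g : mults) :
  g p = 0 :> nat -> weight (mult_upd p x g) = x * m ^ p + weight g.
Proof.
move=> gp0; rewrite /weight (bigD1 p) //= [in RHS](bigD1 p) //= ffunE eqxx gp0.
by congr (_ + _); apply: eq_bigr => i /negbTE ip; rewrite ffunE ip.
Qed.

Lemma full_below_upd (p x : 'I_n.+1) (g : mults) :
  g p = 0 :> nat -> full_below p.+1 (mult_upd p x g) = (0 < x) && full_below p g.
Proof.
move=> gp0; apply/forallP/andP => [full | [x_gt0 /forallP full] i].
- split; first by have /eqP := full p; rewrite ffunE eqxx ltnSn.
  apply/forallP => i; case: (eqVneq i p) => [->|ip]; first by rewrite gp0 !ltnn.
  have := full i; rewrite ffunE (negbTE ip) ltnS.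
  by have ip' : (i : nat) != p := ip; rewrite (ltn_neqAle i) ip'.
- rewrite ffunE ltnS; case: (eqVneq i p) => [->|ip]; first by rewrite leqnn x_gt0.
  by have ip' : (i : nat) != p := ip; rewrite (eqP (full i)) (ltn_neqAle i) ip'.
Qed.

Lemma count_full_split_top (p : 'I_n.+1) N :
  count_full p.+1 N =
  \sum_(0 <= x < n.+1) ((0 < x) && (x * m ^ p <= N)) * count_full p (N - x * m ^ p).
Proof.
rewrite big_mkord /count_full (partition_big (fun f : mults => f p) predT) //=.
apply: eq_bigr => x _.
rewrite (reindex_onto (mult_upd p x) (mult_upd p ord0)); last first.
  by move=> f /eqP fp; apply/ffunP => i; rewrite !ffunE; case: eqP => // ->.
rewrite big_distrr /= big_mkcond /=; apply: eq_bigr => g _.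
rewrite ffunE !eqxx /=.
have [gp0|gp_gt0] := posnP (g p).
- have -> : mult_upd p ord0 (mult_upd p x g) == g.
    by apply/eqP/ffunP => i; rewrite !ffunE; case: eqVneq => // ->; apply: val_inj.
  rewrite full_below_upd // weight_upd //.
  have [le_xN|lt_Nx] := leqP (x * m ^ p) N.
  + rewrite -(eqn_add2l (x * m ^ p) (weight g)) subnKC //.
    by case: (0 < x); rewrite ?mul1n ?mul0n.
  + rewrite (_ : _ + _ == N = false) ?andbF //; apply/negbTE.
    by rewrite neq_ltn (leq_trans lt_Nx) ?leq_addr ?orbT.
- have -> : full_below p g = false.
    by apply/negbTE/negP => /forallP/(_ p); rewrite ltnn gp_gt0.
  rewrite andFb muln0; case: eqP => // gE.
  by move: gp_gt0; rewrite -gE ffunE eqxx.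
Qed.

Lemma count_full_rec p N : p <= n -> N <= n ->
  count_full p.+1 N = \sum_(1 <= x < (N %/ m ^ p).+1) count_full p (N - x * m ^ p).
Proof.
move=> le_pn le_Nn.
have le_qn : (N %/ m ^ p).+1 <= n.+1 by rewrite ltnS (leq_trans (leq_div _ _)).
rewrite (count_full_split_top (Ordinal (le_pn : p < n.+1))) big_ltn // mul0n add0n.
rewrite (big_nat_widen _ _ _ _ _ le_qn).
rewrite [RHS]big_mkcond; apply: eq_big_nat => x /andP[x_gt0 _].
by rewrite ltnS leq_divRL ?expn_gt0 ?m_gt0 // x_gt0; case: (_ <= N); rewrite ?mul1n.
Qed.

Lemma count_full0 N : count_full 0 N = (N == 0).
Proof.
pose f0 : mults := [ffun => ord0].
rewrite /count_full (bigD1 f0) //= big1 ?addn0.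
- have -> : full_below 0 f0 by apply/forallP => i; rewrite ffunE.
  by rewrite /weight big1 ?(eq_sym 0) // => i _; rewrite ffunE.
- move=> f f_neq0; apply/eqP; rewrite eqb0; apply/negP => /andP[/forallP full _].
  move/eqP: f_neq0; apply; apply/ffunP => i; apply: val_inj.
  by have := full i; rewrite ffunE ltn0 lt0n => /eqP/negbFE/eqP.
Qed.

Lemma count_full1 N : N <= n -> count_full 1 N = (0 < N).
Proof.
move=> le_Nn; rewrite count_full_rec // expn0 divn1.
case: N le_Nn => [|N] _; first by rewrite big_geq.
rewrite big_nat_recr //= muln1 subnn count_full0 big_nat big1 // => x /andP[_ lt_xN].
by rewrite count_full0 muln1 subn_eq0 leqNgt lt_xN.
Qed.

Lemma count_full_small p N : p <= n -> N <= n -> N < m ^ p -> count_full p.+1 N = 0.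
Proof. by move=> le_pn le_Nn lt_Nmp; rewrite count_full_rec // divn_small // big_geq. Qed.

Lemma count_full_shift p R B : p <= n -> R < m ^ p -> R + m ^ p * B <= n ->
  count_full p.+1 (R + m ^ p * B) = \sum_(0 <= k < B) count_full p (R + m ^ p * k).
Proof.
move=> le_pn lt_Rmp le_n; have mp_gt0 : 0 < m ^ p by rewrite expn_gt0 m_gt0.
rewrite count_full_rec //.
have -> : (R + m ^ p * B) %/ m ^ p = B by rewrite mulnC addnC divnMDl // divn_small // addn0.
rewrite big_add1 [RHS]big_nat_rev; apply: eq_big_nat => x /andP[_ lt_xB] /=.
have le_x1B : m ^ p * x.+1 <= m ^ p * B by rewrite leq_mul2l lt_xB orbT.
by rewrite add0n mulnBr addnBA // (mulnC x.+1).
Qed.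

Lemma count_full_digits i k : i <= n -> chi m n i.+1 <= k ->
  n %% m ^ i.+1 + m ^ i.+1 * k <= n ->
  count_full i.+1 (n %% m ^ i.+1 + m ^ i.+1 * k) = nested m n i (alpha m n i + m * k).
Proof.
elim: i k => [|i IH] k le_in chi_k le_n.
  rewrite count_full1 // expn1; move: chi_k; rewrite /chi /alpha expn0 divn1 /=.
  case: (posnP (n %% m)) => [-> k_gt0|n_gt0 _].
    by rewrite addn_gt0 muln_gt0 m_gt0 k_gt0.
  by rewrite addn_gt0 n_gt0.
set d := m ^ i.+1; set R := n %% d; set B := alpha m n i.+1 + m * k.
have eN : n %% m ^ i.+2 + m ^ i.+2 * k = R + d * B.
  by rewrite expnSr modnM_digit mulnDr -mulnA addnA.
rewrite eN in le_n *; rewrite count_full_shift ?ltn_mod ?expn_gt0 ?m_gt0 //=.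
rewrite (big_nat_widenl _ _ _ _ _ (leq0n (chi m n i.+1))) [RHS]big_mkcond /=.
apply: eq_big_nat => k' /andP[_ lt_k'B].
have le_n' : R + d * k' <= n.
  by apply: leq_trans le_n; rewrite leq_add2l leq_mul2l (ltnW lt_k'B) orbT.
case: leqP => [chi_k'|]; first exact: IH (ltnW le_in) chi_k' le_n'.
rewrite /chi /=; case: eqP => // alpha0; rewrite ltnS leqn0 => /eqP k'0.
rewrite k'0 muln0 addn0 in le_n' *; apply: count_full_small => //; first exact: ltnW.
rewrite /R /d expnSr modnM_digit -/(alpha m n i) alpha0 muln0 addn0.
by rewrite ltn_mod expn_gt0 m_gt0.
Qed.

Lemma count_full_top r : r <= n -> m ^ r <= n ->
  count_full r.+1 n = nested m n r (n %/ m ^ r).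
Proof.
move=> le_rn le_mrn; set k := n %/ m ^ r.+1.
have n_digits : n %% m ^ r.+1 + m ^ r.+1 * k = n by rewrite addnC mulnC -divn_eq.
have k_alpha : alpha m n r + m * k = n %/ m ^ r.
  by rewrite /k expnSr divnMA /alpha addnC mulnC -divn_eq.
have chi_k : chi m n r.+1 <= k.
  case: (posnP k) => [k0|]; last by rewrite /chi; case: (_ == 0).
  have : 0 < n %/ m ^ r by rewrite divn_gt0 ?expn_gt0 ?m_gt0.
  by rewrite -k_alpha k0 muln0 addn0 /chi /= eqn0Ngt => ->.
by rewrite -k_alpha -[in LHS]n_digits count_full_digits ?n_digits.
Qed.

Lemma full_below_uniq p q f : p <= n.+1 -> q <= n.+1 ->
  full_below p f -> full_below q f -> p = q.
Proof.
wlog lt_pq : p q / p < q.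
  move=> lt_uniq le_pn le_qn full_p full_q.
  by case: (ltngtP p q) => [lt|lt|//]; [|symmetry]; exact: lt_uniq.
move=> _ le_qn /forallP full_p /forallP /(_ (Ordinal (leq_trans lt_pq le_qn))).
by rewrite (eqP (full_p _)) /= ltnn lt_pq.
Qed.

Lemma sum_full_below f :
  \sum_(r < n.+1) full_below r.+1 f = [exists r : 'I_n.+1, full_below r.+1 f].
Proof.
case: existsP => [[r full_r]|none]; last first.
  rewrite big1 // => r _; apply/eqP; rewrite eqb0.
  by apply/negP => full_r; apply: none; exists r.
rewrite (bigD1 r) //= full_r big1 // => r' ne_r'r.
apply/eqP; rewrite eqb0; apply/negP => full_r'.
move/eqP: ne_r'r; apply; apply/val_inj/succn_inj.
exact: full_below_uniq (ltn_ord r') (ltn_ord r) full_r' full_r.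
Qed.

Lemma nogap_full_below f : 0 < n ->
  mary_partition_nogap m f = [exists r : 'I_n.+1, full_below r.+1 f] && (weight f == n).
Proof.
move=> n_gt0; rewrite /mary_partition_nogap -/(weight f) andbC.
have [wf|] := eqVneq (weight f) n; last by rewrite !andbF.
rewrite !andbT; apply/forallP/existsP => [gapless|[r /forallP full_r] i].
  have [i0 fi0] : exists i0, 0 < f i0.
    apply/existsP; apply: contraTT n_gt0; rewrite negb_exists => /forallP f0.
    rewrite -leqNgt -wf leqn0 sum_nat_eq0.
    by apply/forallP => i; rewrite muln_eq0 eqn0Ngt f0.
  case: (@arg_maxnP _ i0 (fun i => 0 < f i) val fi0) => r fr max_r.
  have below_r (k : 'I_n.+1) : k < r -> 0 < f k.
    have /implyP := gapless r; rewrite fr /=.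
    have -> : [forall i', (0 < f i') ==> (i' <= r)].
      by apply/forallP => i'; apply/implyP/max_r.
    by move=> /(_ isT) /forallP /(_ k) /implyP.
  exists r; apply/forallP => i; apply/eqP; apply/idP/idP => [/max_r //|].
  rewrite ltnS leq_eqVlt => /orP[/eqP i_r|/below_r //].
  by rewrite (val_inj i_r).
apply/implyP => /andP[fi _]; apply/forallP => k; apply/implyP => lt_ki.
by rewrite (eqP (full_r k)); rewrite (eqP (full_r i)) in fi; exact: ltn_trans lt_ki fi.
Qed.

Lemma c_sum_count_full : 0 < n -> c m n = \sum_(0 <= r < n.+1) count_full r.+1 n.
Proof.
move=> n_gt0; rewrite big_mkord /c -sum1_card big_mkcond [RHS]exchange_big /=.
apply: eq_bigr => f _; rewrite inE -[if _ then _ else _]/(nat_of_bool _).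
rewrite nogap_full_below // -mulnb -sum_full_below big_distrl.
by apply: eq_bigr => r _; exact: mulnb.
Qed.

End FullMultiplicities.

Theorem theorem1p3 (m n j : nat) :
  2 <= m -> 0 < n -> m ^ j <= n < m ^ j.+1 ->
  c m n = 1 + \sum_(1 <= r < j.+1) nested m n r (n %/ m ^ r).
Proof.
move=> m_gt1 n_gt0 /andP[le_mjn lt_nmj]; have m_gt0 : 0 < m := ltnW m_gt1.
have lt_jn : j < n := leq_trans (ltn_expl j m_gt1) le_mjn.
have no_high_parts : \sum_(j.+1 <= r < n.+1) count_full m n r.+1 n = 0.
  rewrite big_nat big1 // => r /andP[lt_jr lt_rn].
  by apply: count_full_small => //; apply: leq_trans lt_nmj _; rewrite leq_pexp2l.
rewrite c_sum_count_full // (big_cat_nat (leq0n j.+1) (ltnW lt_jn : j.+1 <= n.+1)) /=.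
rewrite no_high_parts addn0 big_ltn // count_full_top //; congr (_ + _).
apply: eq_big_nat => r /andP[_ le_rj]; apply: count_full_top => //.
  exact: leq_trans (le_rj : r <= j) (ltnW lt_jn).
by apply: leq_trans _ le_mjn; rewrite leq_pexp2l.
Qed.
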